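(* Let $(X,d_X,\mu_X)$ be an mm-space with $X=\operatorname{supp}\mu_X$ and $\operatorname{diam}X<\infty$, and let $x_0\in X$ satisfy $\sup_{x\in X}d_X(x,x_0)=\operatorname{diam}X$. Let $\xi:X\to\mathbb R$, $\xi(x):=d_X(x,x_0)$. Then $\xi_*\mu_X$ is a maximal element of $\mathcal M(X;1)$ with respect to the Lipschitz order. In particular, if $\mathcal M(X;1)$ has a maximum, then this maximum is $\xi_*\mu_X$ (up to mm-isomorphism of $(\mathbb R,|\cdot|,\cdot)$).
   Context: An mm-space is a triple $(X,d_X,\mu_X)$ where $(X,d_X)$ is a complete separable metric space and $\mu_X$ is a Borel probability measure on $X$. The 1-measurement is $\mathcal M(X;1):=\{f_*\mu_X \mid f:X\to\mathbb R \text{ is 1-Lipschitz}\}$. Two mm-spaces $X,Y$ are mm-isomorphic if there is an isometry $f:\operatorname{supp}\mu_X\to\operatorname{supp}\mu_Y$ with $f_*\mu_X=\mu_Y$. For mm-spaces, $Y\prec X$ (Lipschitz order) if there is a 1-Lipschitz map $f:\operatorname{supp}\mu_X\to\operatorname{supp}\mu_Y$ with $f_*\mu_X=\mu_Y$; this is a partial order on mm-isomorphism classes. For Borel probability measures $\mu,\nu$ on $\mathbb R$, $\mu\prec\nu$ means $(\mathbb R,|\cdot|,\mu)\prec(\mathbb R,|\cdot|,\nu)$. An element $\mu\in\mathcal M(X;1)$ is maximal if every $\nu\in\mathcal M(X;1)$ with $\mu\prec\nu$ is mm-isomorphic to $\mu$ (as spaces $(\mathbb R,|\cdot|,\cdot)$);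 it is the maximum if $\nu\prec\mu$ for all $\nu\in\mathcal M(X;1)$. *)

From HB Require Import structures.
From mathcomp Require Import all_boot all_order all_algebra.
From mathcomp Require Import all_classical all_reals all_analysis.
Set Implicit Arguments. Unset Strict Implicit. Unset Printing Implicit Defensive.
Import Order.TTheory GRing.Theory Num.Theory.
Local Open Scope classical_set_scope.
Local Open Scope ring_scope.

Section mm.
Context {R : realType} {X : Type}.
Variable dist : X -> X -> R.

Definition is_metric : Prop :=
  [/\ forall x y, 0 <= dist x y,
      forall x y, dist x y = 0 <-> x = y,
      forall x y, dist x y = dist y x &
      forall x y z, dist x z <= dist x y + dist y z].

Definition mball (x : X) (r : R) : set X := [set y | dist x y < r].

Definition mopen (A : set X) : Prop :=
  forall x, A x -> exists2 r : R, 0 < r & mball x r `<=` A.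

Definition mcauchy (u : nat -> X) : Prop :=
  forall e : R, 0 < e -> exists N : nat,
    forall m n : nat, (N <= m)%N -> (N <= n)%N -> dist (u m) (u n) < e.

Definition mcomplete : Prop :=
  forall u : nat -> X, mcauchy u -> exists l : X,
    forall e : R, 0 < e -> exists N : nat, forall n : nat, (N <= n)%N -> dist (u n) l < e.

Definition mseparable : Prop :=
  exists u : nat -> X, forall x (e : R), 0 < e -> exists n, dist x (u n) < e.

Definition lip1 (f : X -> R) : Prop := forall x y, `|f x - f y| <= dist x y.

Definition mdiam : R := sup [set r | exists x y, r = dist x y].

End mm.

Definition mm_space {R : realType} {d : measure_display} {X : measurableType d}
  (dist : X -> X -> R) : Prop :=
  [/\ is_metric dist, mcomplete dist, mseparable dist &
      (@measurable d X) = <<s mopen dist >>].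

Definition msupport {R : realType} {d : measure_display} {X : measurableType d}
  (dist : X -> X -> R) (mu : set X -> \bar R) : set X :=
  [set x | forall r : R, 0 < r -> (0 < mu (mball dist x r))%E].

Section realline.
Context {R : realType}.

Definition rsupport (nu : set R -> \bar R) : set R :=
  [set x | forall r : R, 0 < r -> (0 < nu `](x - r)%R, (x + r)%R[%classic)%E].

(* mu ≺ nu : (R,|.|,mu) ≺ (R,|.|,nu): there is a 1-Lipschitz
   f : supp nu -> supp mu with f_* nu = mu *)
Definition lip_order (mu nu : set R -> \bar R) : Prop :=
  exists f : R -> R,
    [/\ forall x y, rsupport nu x -> rsupport nu y -> `|f x - f y| <= `|x - y|,
        f @` rsupport nu `<=` rsupport mu &
        forall A : set R, measurable A -> mu A = nu (rsupport nu `&` f @^-1` A)].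

(* mm-isomorphism of (R,|.|,mu) and (R,|.|,nu): an isometry
   f : supp mu -> supp nu (onto) with f_* mu = nu *)
Definition mmiso (mu nu : set R -> \bar R) : Prop :=
  exists f : R -> R,
    [/\ forall x y, rsupport mu x -> rsupport mu y -> `|f x - f y| = `|x - y|,
        f @` rsupport mu = rsupport nu &
        forall A : set R, measurable A -> nu A = mu (rsupport mu `&` f @^-1` A)].

Definition lip_maximal (S : set (set R -> \bar R)) (m : set R -> \bar R) : Prop :=
  S m /\ forall nu, S nu -> lip_order m nu -> mmiso m nu.

Definition lip_maximum (S : set (set R -> \bar R)) (m : set R -> \bar R) : Prop :=
  S m /\ forall nu, S nu -> lip_order nu m.

End realline.

Definition measurement1 {R : realType} {d : measure_display} {X : measurableType d}
  (dist : X -> X -> R) (mu : set X -> \bar R) : set (set R -> \bar R) :=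
  [set nu | exists f : X -> R, lip1 dist f /\ nu = pushforward mu f].

From HB Require Import structures.
From mathcomp Require Import all_boot all_order all_algebra.
From mathcomp Require Import all_classical all_reals all_analysis.
From mathcomp Require Import ring lra measurable_realfun.
Import Order.TTheory GRing.Theory Num.Theory.
Import numFieldNormedType.Exports.
Local Open Scope classical_set_scope.
Local Open Scope ring_scope.
Set Implicit Arguments.
Unset Strict Implicit.

(* Suppose ξ_*μ ≺ f_*μ through a 1-Lipschitz map g. The support of f_*μ has
   diameter at most D := diam X, whereas the support of ξ_*μ contains
   ξ(x0) = 0 and values arbitrarily close to D. A 1-Lipschitz map from a
   subset of ℝ of diameter at most D onto a set of diameter D is an isometry:
   every pair u, v sits "inside" a pair s, t that g stretches to length almost
   D. Isometries between subsets of ℝ are restrictions of x ↦ ±x + c, and the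
   inverse map transports ξ_*μ back onto f_*μ. *)

Section real_line.
Variable R : realType.
Implicit Types nu rho : {measure set R -> \bar R}.

Lemma in_itv_ball (x r y : R) : `](x - r), (x + r)[%classic y <-> `|x - y| < r.
Proof. by rewrite /= in_itv /= ltr_distlC. Qed.

Lemma measure_gt0_nonempty d (T : semiRingOfSetsType d)
    (m : {content set T -> \bar R}) (A : set T) :
  (0 < m A)%E -> A !=set0.
Proof.
by move=> mA; apply/set0P; apply: contraTneq mA => ->; rewrite measure0 ltxx.
Qed.

Lemma rsupport_pushforward_approx d (T : measurableType d)
    (m : {measure set T -> \bar R}) (f : T -> R) u r :
  rsupport (pushforward m f) u -> 0 < r -> exists x, `|u - f x| < r.
Proof.
move=> m_u /m_u; rewrite /pushforward.
by move=> /measure_gt0_nonempty[x /in_itv_ball]; exists x.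
Qed.

Lemma rsupport_pushforward_diam d (T : measurableType d)
    (m : {measure set T -> \bar R}) (f : T -> R) (D : R) :
  (forall x y, `|f x - f y| <= D) ->
  forall u v, rsupport (pushforward m f) u -> rsupport (pushforward m f) v ->
  `|u - v| <= D.
Proof.
move=> fD u v m_u m_v; apply/ler_addgt0Pr => e e0.
have e2 : 0 < e / 2 by rewrite divr_gt0.
have [x ux] := rsupport_pushforward_approx m_u e2.
have [y vy] := rsupport_pushforward_approx m_v e2.
have := ler_distD (f x) u v; have := ler_distD (f y) (f x) v.
by rewrite distrC in vy; have := fD x y; lra.
Qed.

Lemma rsupport_of_approx nu z :
  (forall r, 0 < r -> exists2 u, rsupport nu u & `|z - u| < r) ->
  rsupport nu z.
Proof.
move=> approx r r0; have r2 : 0 < r / 2 by rewrite divr_gt0.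
have [u nu_u zu] := approx _ r2.
apply: (lt_le_trans (nu_u _ r2)); apply: le_measure; rewrite ?inE.
1, 2: exact: measurable_itv.
by move=> y /in_itv_ball uy; apply/in_itv_ball; have := ler_distD u z y; lra.
Qed.

Lemma closed_rsupport nu : closed (rsupport nu).
Proof.
move=> z z_cl; apply: rsupport_of_approx => r r0.
have [u [nu_u zu]] := z_cl _ (nbhsx_ballx z r r0).
by exists u; rewrite // -ball_normE.
Qed.

Lemma lip_order_rsupport_approx nu (rho : set R -> \bar R) (g : R -> R) :
  (forall A, measurable A -> rho A = nu (rsupport nu `&` g @^-1` A)) ->
  forall y r, rsupport rho y -> 0 < r ->
  exists2 u, rsupport nu u & `|y - g u| < r.
Proof.
move=> rhoE y r rho_y r0; have := rho_y r r0.
rewrite rhoE; last exact: measurable_itv.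
by move=> /measure_gt0_nonempty[u [nu_u /in_itv_ball]]; exists u.
Qed.

(* If s < t, then u and v lie within e of [s, t]; pairing them in order
   with s and t wastes at most 4 e. *)
Lemma four_point_pairing (D e s t u v : R) :
  D - e < `|s - t| -> `|s - t| <= D ->
  `|s - u| <= D -> `|s - v| <= D -> `|t - u| <= D -> `|t - v| <= D ->
  `|s - u| + `|t - v| + `|u - v| <= D + 4 * e \/
  `|s - v| + `|t - u| + `|u - v| <= D + 4 * e.
Proof.
wlog st : s t / s <= t.
  move=> H; have [st|/ltW ts] := leP s t; first exact: H st.
  rewrite (distrC s t) => hts hts' hsu hsv htu htv.
  by have [|] := H t s ts hts hts' htu htv hsu hsv; [right|left]; lra.
wlog uv : u v / u <= v.
  move=> H; have [uv|/ltW vu] := leP u v; first exact: H uv.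
  rewrite (distrC u v) => hst hst' hsu hsv htu htv.
  by have [|] := H v u vu hst hst' hsv hsu htv htu; [right|left]; lra.
have -> : `|s - t| = t - s by rewrite distrC ger0_norm ?subr_ge0.
have -> : `|u - v| = v - u by rewrite distrC ger0_norm ?subr_ge0.
rewrite !ler_norml => hst hst' _ /andP[hvs _] /andP[_ htu] _; left.
by have [su|us] := lerP s u; have [vt|tv] := lerP v t; lra.
Qed.

Lemma lip_isometry_of_far_pair (S : set R) (D : R) (g : R -> R) :
  (forall u v, S u -> S v -> `|u - v| <= D) ->
  (forall u v, S u -> S v -> `|g u - g v| <= `|u - v|) ->
  (forall e, 0 < e -> exists s t, [/\ S s, S t & D - e < `|g s - g t|]) ->
  forall u v, S u -> S v -> `|g u - g v| = `|u - v|.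
Proof.
move=> diamS glip far u v Su Sv; apply/le_anti; rewrite glip //=.
apply/ler_addgt0Pr => e e0; have e5 : 0 < e / 5 by rewrite divr_gt0.
have [s [t [Ss St gst]]] := far _ e5.
have st := lt_le_trans gst (glip _ _ Ss St).
have [] := four_point_pairing st (diamS _ _ Ss St) (diamS _ _ Ss Su)
  (diamS _ _ Ss Sv) (diamS _ _ St Su) (diamS _ _ St Sv).
- have := ler_distD (g u) (g s) (g t); have := ler_distD (g v) (g u) (g t).
  by have := glip _ _ Ss Su; have := glip _ _ Sv St; rewrite (distrC v t); lra.
- have := ler_distD (g v) (g s) (g t); have := ler_distD (g u) (g v) (g t).
  have := glip _ _ Ss Sv; have := glip _ _ Su St.
  by rewrite (distrC u t) (distrC (g v) (g u)); lra.
Qed.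

Lemma norm1_mulrr (x : R) : `|x| = 1 -> x * x = 1.
Proof. by move=> x1; apply/eqP; rewrite -expr2 sqr_norm_eq1 x1. Qed.

Lemma polarization_dist (p p0 p1 q q0 q1 : R) :
  `|p - p0| = `|q - q0| -> `|p1 - p0| = `|q1 - q0| -> `|p - p1| = `|q - q1| ->
  (p - p0) * (p1 - p0) = (q - q0) * (q1 - q0).
Proof.
move=> /(congr1 (fun x => x ^+ 2)) h0 /(congr1 (fun x => x ^+ 2)) h1.
move=> /(congr1 (fun x => x ^+ 2)) h2.
by rewrite !real_normK ?num_real // in h0 h1 h2; nra.
Qed.

Lemma isometry_on_affine (S : set R) (g : R -> R) :
  (forall u v, S u -> S v -> `|g u - g v| = `|u - v|) ->
  exists sg c, `|sg| = 1 /\ forall u, S u -> g u = sg * u + c.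
Proof.
move=> iso.
have [[u0 [u1 [S0 S1 u10]]]|single] :=
  pselect (exists u0 u1, [/\ S u0, S u1 & u1 != u0]); last first.
  exists 1, (g (xget 0 S) - xget 0 S); split=> [|u Su]; first exact: normr1.
  have Sx : S (xget 0 S) by apply: xgetPex; exists u.
  have [->|ne] := eqVneq u (xget 0 S); first by ring.
  by exfalso; apply: single; exists (xget 0 S), u.
set sg := (g u1 - g u0) / (u1 - u0).
have w0 : u1 - u0 != 0 by rewrite subr_eq0.
have g1 : g u1 - g u0 = sg * (u1 - u0) by rewrite /sg divfK.
have sg1 : `|sg| = 1 by rewrite normrM normfV iso // divff // normr_eq0.
have sg2 := norm1_mulrr sg1.
exists sg, (g u0 - sg * u0); split => // u Su.
have := polarization_dist (iso _ _ Su S0) (iso _ _ S1 S0) (iso _ _ Su S1).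
rewrite g1 mulrA => /(mulIf w0) gu.
have : g u - g u0 = sg * (u - u0) by rewrite -gu mulrC -mulrA sg2 mulr1.
by move=> /eqP; rewrite subr_eq => /eqP ->; ring.
Qed.

Lemma lip_order_affine_image nu (rho : set R -> \bar R) (g : R -> R) sg c :
  `|sg| = 1 -> (forall u, rsupport nu u -> g u = sg * u + c) ->
  (forall A, measurable A -> rho A = nu (rsupport nu `&` g @^-1` A)) ->
  rsupport rho `<=` g @` rsupport nu.
Proof.
move=> sg1 gE rhoE y rho_y; have sg2 := norm1_mulrr sg1.
have nu_z : rsupport nu (sg * (y - c)).
  apply: rsupport_of_approx => r r0.
  have [u nu_u yu] := lip_order_rsupport_approx rhoE rho_y r0.
  exists u => //; rewrite -[u in _ - u]mul1r -sg2 -mulrA -mulrBr normrM sg1.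
  by rewrite mul1r (_ : y - c - _ = y - g u) // gE //; ring.
by exists (sg * (y - c)) => //; rewrite gE // mulrA sg2 mul1r subrK.
Qed.

Lemma mmiso_affine_inverse nu rho (g : R -> R) sg c :
  (forall A, measurable A -> nu (rsupport nu `&` A) = nu A) ->
  `|sg| = 1 -> (forall u, rsupport nu u -> g u = sg * u + c) ->
  g @` rsupport nu = rsupport rho ->
  (forall A, measurable A -> rho A = nu (rsupport nu `&` g @^-1` A)) ->
  mmiso rho nu.
Proof.
move=> nu_full sg1 gE gsuppE rhoE; have sg2 := norm1_mulrr sg1.
pose h y := sg * (y - c).
have hg u : rsupport nu u -> h (g u) = u.
  by move=> nu_u; rewrite /h gE // addrK mulrA sg2 mul1r.
have mh : measurable_fun setT h.
  apply: measurable_funM; first exact: measurable_cst.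
  by apply: measurable_funB; [exact: measurable_id | exact: measurable_cst].
exists h; split.
- move=> y y' _ _; rewrite /h -mulrBr normrM sg1 mul1r.
  by have -> : y - c - (y' - c) = y - y' by ring.
- rewrite -gsuppE; apply/seteqP; split => [_ [_ [u nu_u <-] <-]|u nu_u].
    by rewrite hg.
  by exists (g u); [exists u | rewrite hg].
move=> A mA; rewrite rhoE; last first.
  apply: measurableI; last by rewrite -[h @^-1` A]setTI; exact: mh.
  by apply: closed_measurable; apply: closed_rsupport.
rewrite -nu_full //; congr (nu _); apply/seteqP; split => u /=.
  by case=> nu_u Au; split; [|split; [rewrite -gsuppE; exists u | rewrite hg]].
by case=> nu_u [_]; rewrite hg.
Qed.

Theorem lip_order_far_mmiso nu rho (D : R) :
  (forall A, measurable A -> nu (rsupport nu `&` A) = nu A) ->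
  (forall u v, rsupport nu u -> rsupport nu v -> `|u - v| <= D) ->
  (forall e, 0 < e -> exists y y',
    [/\ rsupport rho y, rsupport rho y' & D - e < `|y - y'|]) ->
  lip_order rho nu -> mmiso rho nu /\ mmiso nu rho.
Proof.
move=> nu_full diam_nu far_rho [g [glip gsupp rhoE]].
have approx := lip_order_rsupport_approx rhoE.
have iso : forall u v, rsupport nu u -> rsupport nu v ->
    `|g u - g v| = `|u - v|.
  apply: lip_isometry_of_far_pair diam_nu glip _ => e e0.
  have e3 : 0 < e / 3 by rewrite divr_gt0.
  have [y [y' [rho_y rho_y' yy']]] := far_rho _ e3.
  have [s nu_s ys] := approx _ _ rho_y e3.
  have [t nu_t yt] := approx _ _ rho_y' e3.
  exists s, t; split => //.
  have := ler_distD (g s) y y'; have := ler_distD (g t) (g s) y'.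
  by rewrite distrC in yt; lra.
have [sg [c [sg1 gE]]] := isometry_on_affine iso.
have gsuppE : g @` rsupport nu = rsupport rho.
  apply/seteqP; split; first exact: gsupp.
  exact: lip_order_affine_image sg1 gE rhoE.
split; first exact: mmiso_affine_inverse nu_full sg1 gE gsuppE rhoE.
by exists g.
Qed.

End real_line.

Section metric.
Context {R : realType} {X : Type} (dist : X -> X -> R).

Lemma mball_mopen x r : is_metric dist -> mopen dist (mball dist x r).
Proof.
case=> _ _ _ tri y; rewrite /mball /= => xy.
exists (r - dist x y); first by rewrite subr_gt0.
by move=> z /= yz; have := tri x y z; lra.
Qed.

Lemma lip1_mopen_preimage_itv (f : X -> R) a b :
  lip1 dist f -> mopen dist (f @^-1` `]a, b[%classic).
Proof.
move=> lf x /=; rewrite in_itv /= => /andP[ax xb].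
exists (Num.min (f x - a) (b - f x)); first by rewrite lt_min !subr_gt0 ax xb.
move=> y; rewrite /mball /= lt_min in_itv /= => /andP[ya yb].
have := le_lt_trans (lf x y) ya; have := le_lt_trans (lf x y) yb.
by rewrite !ltr_norml => /andP[? ?] /andP[? ?]; apply/andP; split; lra.
Qed.

Lemma lip1_dist x0 : is_metric dist -> lip1 dist (fun x => dist x x0).
Proof.
case=> _ _ sym tri x y; rewrite ler_norml.
by have := tri x y x0; have := tri y x x0; have := sym x y; lra.
Qed.

Lemma dist_le_mdiam :
  (exists M, forall x y, dist x y <= M) -> forall x y, dist x y <= mdiam dist.
Proof.
move=> [M distM] x y; apply: sup_upper_bound; last by exists x, y.
by split; [exists (dist x y), x, y | exists M => _ [a [b ->]]].
Qed.

Lemma exists_far_from x0 :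
  (exists M, forall x y, dist x y <= M) ->
  sup [set r | exists x, r = dist x x0] = mdiam dist ->
  forall e, 0 < e -> exists x, mdiam dist - e < dist x x0.
Proof.
move=> [M distM] supE e e0; rewrite -supE.
have hs : has_sup [set r | exists x, r = dist x x0].
  by split; [exists (dist x0 x0), x0 | exists M => _ [x ->]].
by have [_ [x ->]] := sup_adherent e0 hs; exists x.
Qed.

End metric.

Section mm_space.
Context {R : realType} {d : measure_display} {X : measurableType d}.
Variables (dist : X -> X -> R) (mu : probability X R).
Hypothesis dist_metric : is_metric dist.
Hypothesis measurable_mopen : @measurable d X = <<s mopen dist >>.
Hypothesis supp_mu : msupport dist mu = [set: X].

Lemma mopen_measurable A : mopen dist A -> measurable A.
Proof. by rewrite measurable_mopen; exact: sub_sigma_algebra. Qed.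

Lemma lip1_measurable f : lip1 dist f -> measurable_fun setT f.
Proof.
move=> lf; apply: (measurability _ (RGenOpens.measurableE R)).
move=> _ [_ [a [b ->]] <-]; rewrite setTI.
exact/mopen_measurable/lip1_mopen_preimage_itv.
Qed.

Lemma rsupport_pushforward_lip1 f x :
  lip1 dist f -> rsupport (pushforward mu f) (f x).
Proof.
move=> lf r r0; have /(_ r r0) mu_ball : msupport dist mu x by rewrite supp_mu.
apply: (lt_le_trans mu_ball); apply: le_measure; rewrite ?inE.
- exact/mopen_measurable/mball_mopen.
- exact/mopen_measurable/lip1_mopen_preimage_itv.
by move=> y xy; apply/in_itv_ball; exact: le_lt_trans (lf x y) xy.
Qed.

Lemma pushforward_rsupportI f A : lip1 dist f ->
  pushforward mu f (rsupport (pushforward mu f) `&` A) = pushforward mu f A.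
Proof.
move=> lf; congr (mu _); apply/seteqP; split => [x []//|x Ax].
by split=> //; exact: rsupport_pushforward_lip1.
Qed.

Lemma lip_order_dist_pushforward_mmiso x0 f :
  (exists M, forall x y, dist x y <= M) ->
  sup [set r | exists x, r = dist x x0] = mdiam dist ->
  lip1 dist f ->
  lip_order (pushforward mu (fun x => dist x x0)) (pushforward mu f) ->
  mmiso (pushforward mu (fun x => dist x x0)) (pushforward mu f) /\
  mmiso (pushforward mu f) (pushforward mu (fun x => dist x x0)).
Proof.
move=> bounded supE lf; have lxi := lip1_dist x0 dist_metric.
apply: (@lip_order_far_mmiso _ (pushforward mu f)
  (pushforward mu (fun x => dist x x0)) (mdiam dist)).
(* The first two goals make the two pushforwards measures. *)
- exact: lip1_measurable.
- exact: lip1_measurable.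
- by move=> mf A _; exact: pushforward_rsupportI.
- move=> mf; apply: rsupport_pushforward_diam => x y.
  exact: le_trans (lf x y) (dist_le_mdiam bounded x y).
move=> mxi e /(exists_far_from bounded supE)[x1 far].
exists (dist x1 x0), (dist x0 x0); split; try exact: rsupport_pushforward_lip1.
have [dist_ge0 dist_eq0 _ _] := dist_metric.
by rewrite (proj2 (dist_eq0 x0 x0)) // subr0 ger0_norm.
Qed.

End mm_space.

Theorem corollary1p3 (R : realType) (d : measure_display) (X : measurableType d)
  (dist : X -> X -> R) (mu : probability X R) (x0 : X) :
  mm_space dist ->
  msupport dist mu = [set: X] ->
  (exists M : R, forall x y : X, dist x y <= M) ->
  sup [set r | exists x : X, r = dist x x0] = mdiam dist ->
  lip_maximal (measurement1 dist mu) (pushforward mu (fun x => dist x x0)) /\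
  (forall m, lip_maximum (measurement1 dist mu) m ->
     mmiso m (pushforward mu (fun x => dist x x0))).
Proof.
move=> [metric _ _ borel] supp_mu bounded supE.
have key f :=
  lip_order_dist_pushforward_mmiso metric borel supp_mu (f := f) bounded supE.
have xi_in : measurement1 dist mu (pushforward mu (fun x => dist x x0)).
  by exists (fun x => dist x x0); split => //; exact: lip1_dist.
split; first by split=> // _ [f [lf ->]] /(key f lf)[].
by move=> _ [[f [lf ->]] max_f]; have [] := key f lf (max_f _ xi_in).
Qed.
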